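(* For every $a \in \mathbb{N}$ and every integer $b \ge 2$, $R_\mathrm{ord}(S_a^\mathrm{sc}, C_b^\mathrm{mon}) = 1 + (a-1)(b-1)$.
   Context: All graphs are finite, simple and undirected, and a graph of order $n$ has vertex set $\{0,1,\ldots,n-1\}$; $K_n$ is the complete graph on $\{0,\ldots,n-1\}$. A $2$-edge-coloring of $K_n$ assigns each edge a color in $\{1,2\}$. For a graph $H$ and such a coloring, an embedding of $H$ in color $j$ is an injective map $\varphi\colon V(H)\to V(K_n)$ such that for every edge $uv$ of $H$ the edge $\{\varphi(u),\varphi(v)\}$ has color $j$; it is increasing if $\varphi(0)<\cdots<\varphi(|H|-1)$. The ordered Ramsey number $R_\mathrm{ord}(H_1,H_2)$ is the smallest $n$ such that every $2$-edge-coloring of $K_n$ admits an increasing embedding of $H_1$ in color $1$ or an increasing embedding of $H_2$ in color $2$. The start-central star $S_n^\mathrm{sc}$ is the graph of order $n$ whose edges are exactly $\{0,v\}$ for $1\le v\le n-1$. For $n\ge3$ the monotone cycle $C_n^\mathrm{mon}$ has edges $\{i,i+1\}$ ($0\le i\le n-2$) and $\{0,n-1\}$; by convention $C_2^\mathrm{mon}=K_2$. *)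

From mathcomp Require Import all_boot.
Set Implicit Arguments. Unset Strict Implicit. Unset Printing Implicit Defensive.

(* A (finite simple) graph of order [gorder] on vertex set {0,..,gorder-1};
   [gedge u v] is the (symmetric) edge relation, only meaningful on vertices
   < gorder. *)
Record graph := Graph { gorder : nat; gedge : rel nat }.

(* A 2-edge-coloring of K_n: for x < y the edge {x,y} gets color [c x y];
   colors are booleans: [true] = color 1, [false] = color 2.  Values of
   [c x y] with x >= y are irrelevant. *)
Definition coloring (n : nat) := 'I_n -> 'I_n -> bool.

Definition edge_color n (c : coloring n) (x y : 'I_n) : bool :=
  if (x < y)%N then c x y else c y x.

Definition incr_embedding (H : graph) n (c : coloring n) (j : bool)
    (phi : 'I_(gorder H) -> 'I_n) : Prop :=
  (forall u v : 'I_(gorder H), (u < v)%N -> (phi u < phi v)%N) /\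
  (forall u v : 'I_(gorder H), gedge H u v -> edge_color c (phi u) (phi v) = j).

Definition ord_ramsey_prop (H1 H2 : graph) (n : nat) : Prop :=
  forall c : coloring n,
    (exists phi, @incr_embedding H1 n c true phi) \/
    (exists phi, @incr_embedding H2 n c false phi).

Definition is_ord_ramsey_number (H1 H2 : graph) (N : nat) : Prop :=
  ord_ramsey_prop H1 H2 N /\ (forall n, (n < N)%N -> ~ ord_ramsey_prop H1 H2 n).

Definition star_sc (n : nat) : graph :=
  Graph n (fun u v => ((u == 0) && (0 < v < n)) || ((v == 0) && (0 < u < n))).

(* monotone cycle C_n^mon (n >= 3): edges {i,i+1} (i <= n-2) and {0,n-1};
   for n = 2 this gives exactly the single edge {0,1}, i.e. K_2. *)
Definition cycle_mon (n : nat) : graph :=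
  Graph n (fun u v => [&& (u < n), (v < n), (u != v) &
     [|| v == u.+1, u == v.+1, (u == 0) && (v == n.-1) | (v == 0) && (u == n.-1)]]).

From mathcomp Require Import all_boot zify.
Set Implicit Arguments. Unset Strict Implicit. Unset Printing Implicit Defensive.

(* Upper bound: if some vertex has a-1 forward neighbours in colour 1, it is
   the centre of a colour-1 star S_a.  Otherwise, in any vertex set S the
   vertices with no forward colour-2 edge inside S pairwise see each other in
   colour 1, so there are at most a-1 of them (the smallest one sees all the
   others); discarding them and recursing yields a colour-2 monotone path on
   b-1 vertices among the at least (a-1)(b-2)+1 forward colour-2 neighbours
   of vertex 0, and 0 closes it into a colour-2 monotone cycle C_b.
   Lower bound: cut {0,...,n-1} into consecutive blocks of a-1 vertices and
   give colour 1 exactly to the edges inside a block.  A colour-1 star needs a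
   vertices in one block, while consecutive vertices of a colour-2 monotone
   cycle lie in strictly increasing blocks, so it needs b blocks. *)

Definition simple_graph (H : graph) :=
  symmetric (gedge H) /\ irreflexive (gedge H).

Lemma star_sc_simple k : simple_graph (star_sc k).
Proof. by split=> [u v|[|u]] /=; rewrite 1?orbC. Qed.

Lemma cycle_mon_simple k : simple_graph (cycle_mon k).
Proof.
split=> [u v|u] /=; last by rewrite eqxx !andbF.
by rewrite [v == u]eq_sym andbCA orbCA [(v == 0) && _ || _]orbC.
Qed.

Lemma ltn_ord_trans n : transitive (relpre (@nat_of_ord n) ltn).
Proof. by move=> y x z; apply: ltn_trans. Qed.

Lemma edge_colorC n (c : coloring n) x y :
  x != y -> edge_color c x y = edge_color c y x.
Proof.
move=> ne; rewrite /edge_color; case: ltngtP => // /val_inj eq_xy.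
by rewrite eq_xy eqxx in ne.
Qed.

Lemma incr_embedding_lt (H : graph) n (c : coloring n) j
    (phi : 'I_(gorder H) -> 'I_n) :
  simple_graph H ->
  (forall u v : 'I_(gorder H), u < v -> phi u < phi v) ->
  (forall u v : 'I_(gorder H), u < v -> gedge H u v ->
     edge_color c (phi u) (phi v) = j) ->
  @incr_embedding H n c j phi.
Proof.
move=> [symH irrH] incr edges; split=> // u v uv.
have [lt_uv|lt_vu|/val_inj eq_uv] := ltngtP u v; first exact: edges.
  rewrite edge_colorC; first by apply: edges; rewrite // symH.
  by rewrite -val_eqE /= neq_ltn (incr _ _ lt_vu) orbT.
by rewrite eq_uv irrH in uv.
Qed.

Lemma sorted_enum_ord n (A : {pred 'I_n}) : sorted (relpre val ltn) (enum A).
Proof.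
rewrite /enum_mem -enumT; apply: sorted_filter; first exact: ltn_ord_trans.
by rewrite -sorted_map val_enum_ord iota_ltn_sorted.
Qed.

Lemma sorted_nth_incr n (x0 : 'I_n) (s : seq 'I_n) :
  sorted (relpre val ltn) s ->
  forall u v : 'I_(size s), u < v -> nth x0 s u < nth x0 s v.
Proof.
move=> s_sorted u v lt_uv.
by apply: (sorted_ltn_nth (@ltn_ord_trans n) x0 s_sorted); rewrite ?inE ?ltn_ord.
Qed.

Section ForwardEdges.

Variables (n : nat) (c : coloring n).

Definition fwd_edge (j : bool) : rel 'I_n :=
  fun x y => (x < y) && (edge_color c x y == j).

Definition fwd_nbrs j x : {set 'I_n} := [set y | fwd_edge j x y].

Definition dead_ends j (S : {set 'I_n}) : {set 'I_n} :=
  [set x in S | [disjoint fwd_nbrs j x & S]].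

Lemma fwd_edge_colors j x y :
  fwd_edge j x y -> edge_color c x y = j /\ edge_color c y x = j.
Proof.
case/andP=> lt_xy /eqP col; split=> //.
by rewrite edge_colorC ?col // -val_eqE /= neq_ltn lt_xy orbT.
Qed.

Lemma fwd_path_sorted j x s :
  path (fwd_edge j) x s -> sorted (relpre val ltn) (x :: s).
Proof. by apply: sub_path => y z /andP[]. Qed.

Lemma star_embedding j x s :
  sorted (relpre val ltn) s -> {subset s <= fwd_nbrs j x} ->
  exists phi, @incr_embedding (star_sc (size s).+1) n c j phi.
Proof.
move=> s_sorted s_nbrs.
have s_fwd y : y \in s -> fwd_edge j x y by move/s_nbrs; rewrite inE.
have xs_sorted : sorted (relpre val ltn) (x :: s).
  rewrite /= path_sortedE ?s_sorted ?andbT; last exact: ltn_ord_trans.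
  by apply/allP => y /s_fwd /andP[].
exists (fun i => nth x (x :: s) i).
apply: incr_embedding_lt (star_sc_simple _) (sorted_nth_incr x xs_sorted) _.
move=> [[|u] _] [[|v] lt_v] //= _ _.
by case: (fwd_edge_colors (s_fwd _ (mem_nth x (lt_v : v < size s)))).
Qed.

Lemma cycle_embedding j x s :
  path (fwd_edge j) x s -> edge_color c (last x s) x = j ->
  exists phi, @incr_embedding (cycle_mon (size s).+1) n c j phi.
Proof.
move=> s_path closing.
exists (fun i => nth x (x :: s) i).
apply: incr_embedding_lt (cycle_mon_simple _)
  (sorted_nth_incr x (fwd_path_sorted s_path)) _.
move=> u v lt_uv /= /and4P[_ _ _].
case/or4P=> [/eqP v_succ|/eqP u_succ|/andP[/eqP u0 /eqP v_last]|/andP[/eqP v0 _]].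
- have lt_u : u < size s by rewrite -ltnS -v_succ.
  by rewrite v_succ; move/pathP: s_path => /(_ x u lt_u) /fwd_edge_colors[].
- by rewrite u_succ ltnNge leqnSn in lt_uv.
- have := sorted_nth_incr x (fwd_path_sorted s_path) lt_uv.
  have nth_size : nth x (x :: s) (size s) = last x s.
    exact: (nth_last x (x :: s)).
  rewrite u0 v_last /= nth_size => lt_x_last.
  by rewrite edge_colorC // -val_eqE /= neq_ltn lt_x_last.
- by rewrite v0 in lt_uv.
Qed.

Section FewForwardEdges.

Variables (j : bool) (m : nat).
Hypothesis few_fwd : forall x, #|fwd_nbrs (~~ j) x| < m.

Lemma card_dead_ends S : #|dead_ends j S| <= m.
Proof.
have [->|[x0 x0D]] := set_0Vmem (dead_ends j S); first by rewrite cards0.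
case: (@arg_minnP _ x0 (fun x => x \in dead_ends j S) val x0D) => x xD x_min.
suff sub : dead_ends j S :\ x \subset fwd_nbrs (~~ j) x.
  by rewrite (cardsD1 x) xD add1n (leq_ltn_trans (subset_leq_card sub)).
apply/subsetP => y; rewrite in_setD1 => /andP[ne_yx yD].
have lt_xy : x < y by rewrite ltn_neqAle eq_sym val_eqE ne_yx (x_min y yD).
move: xD yD; rewrite !inE => /andP[_ xdead] /andP[yS _].
have := disjointFl xdead yS; rewrite inE /fwd_edge lt_xy /=.
by case: (edge_color c x y); case: j.
Qed.

Lemma long_fwd_path k (S : {set 'I_n}) : m * k < #|S| ->
  exists (x : 'I_n) (s : seq 'I_n),
    [/\ path (fwd_edge j) x s, size s = k & {subset x :: s <= S}].
Proof.
elim: k S => [|k IH] S card_S.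
  have [x xS] : exists x, x \in S by apply/set0Pn; rewrite -card_gt0; lia.
  by exists x, [::]; split=> // y; rewrite inE => /eqP ->.
have /IH [x [s [s_path s_size s_sub]]] : m * k < #|S :\: dead_ends j S|.
  have := cardsID (dead_ends j S) S.
  have := subset_leq_card (subsetIr S (dead_ends j S)).
  have := card_dead_ends S; rewrite mulnS in card_S; lia.
have := s_sub _ (mem_last x s); rewrite !inE => /andP[not_dead lastS].
rewrite lastS /= -setI_eq0 in not_dead.
case/set0Pn: not_dead => y; rewrite !inE => /andP[fwd_y yS].
exists x, (rcons s y); split.
- by rewrite rcons_path s_path.
- by rewrite size_rcons s_size.
- move=> z; rewrite -rcons_cons mem_rcons inE => /orP[/eqP -> //|].
  by move/s_sub; rewrite inE => /andP[].
Qed.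

End FewForwardEdges.

End ForwardEdges.

Lemma card_fwd_nbrs0 N (c : coloring N.+1) :
  #|fwd_nbrs c true ord0| + #|fwd_nbrs c false ord0| = N.
Proof.
transitivity #|[set~ (ord0 : 'I_N.+1)]|; last by rewrite cardsC1 card_ord.
rewrite -(cardsID (fwd_nbrs c true ord0) [set~ ord0]).
congr (_ + _); apply: eq_card => y; rewrite !inE /fwd_edge -val_eqE /= -lt0n.
  by case: (0 < y) => //=; case: (edge_color _ _ _).
by case: (0 < y); case: (edge_color _ _ _).
Qed.

Lemma ramsey_upper m b (c : coloring (m * b.+1).+1) :
  (exists phi, @incr_embedding (star_sc m.+1) _ c true phi) \/
  (exists phi, @incr_embedding (cycle_mon b.+2) _ c false phi).
Proof.
have [/existsP [x many_red]|/existsPn few_red] :=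
  boolP [exists x, m <= #|fwd_nbrs c true x|].
  left; rewrite cardE in many_red.
  have := @star_embedding _ c true x (take m (enum (fwd_nbrs c true x))).
  rewrite size_takel //; apply.
    exact/take_sorted/sorted_enum_ord.
  by move=> y /mem_take; rewrite mem_enum.
right; have few_fwd x : #|fwd_nbrs c (~~ false) x| < m.
  by rewrite ltnNge few_red.
have many_blue : m * b < #|fwd_nbrs c false ord0|.
  have := card_fwd_nbrs0 c; have /= := few_fwd ord0; have := mulnS m b; lia.
have [x [s [s_path s_size s_sub]]] := long_fwd_path few_fwd many_blue.
have fwd0 y : y \in x :: s -> fwd_edge c false ord0 y by move/s_sub; rewrite inE.
have := @cycle_embedding _ c false ord0 (x :: s).
rewrite /= s_size; apply; first by rewrite s_path fwd0 ?mem_head.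
by case: (fwd_edge_colors (fwd0 _ (mem_last x s))).
Qed.

Definition block_coloring m n : coloring n := fun x y => x %/ m == y %/ m.
Arguments block_coloring : clear implicits.

Lemma edge_color_block m n (x y : 'I_n) :
  edge_color (block_coloring m n) x y = (x %/ m == y %/ m).
Proof. by rewrite /edge_color /block_coloring; case: ifP; rewrite // eq_sym. Qed.

Lemma ltn_chain (f : nat -> nat) k :
  (forall i, i < k -> f i < f i.+1) -> f 0 + k <= f k.
Proof.
elim: k => [|k IH] incr; first by rewrite addn0.
rewrite addnS (leq_ltn_trans (IH _)) ?incr // => i lt_ik.
by apply: incr; apply: ltnW.
Qed.

Lemma no_red_star_block m n : 0 < m ->
  ~ exists phi, @incr_embedding (star_sc m.+1) n (block_coloring m n) true phi.
Proof.
move=> m_gt0 [phi [incr edges]].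
pose f i := val (phi (inord i)).
have spread : f 0 + m <= f m.
  by apply: ltn_chain => i lt_im; apply: incr; rewrite !inordK //; lia.
have same_block : f 0 %/ m = f m %/ m.
  apply/eqP; rewrite -edge_color_block edges //= !inordK //; lia.
have := leq_div2r m spread; rewrite -same_block -[m in _ + m]mul1n divnDMl //.
lia.
Qed.

Lemma no_blue_cycle_block m b n : n <= m * b.+1 ->
  ~ exists phi, @incr_embedding (cycle_mon b.+2) n (block_coloring m n) false phi.
Proof.
move=> n_le [phi [incr edges]].
have m_gt0 : 0 < m.
  by have [m0|//] := posnP m; have := ltn_ord (phi ord0); rewrite m0 in n_le; lia.
pose f i := phi (inord i) %/ m.
have climb : f 0 + b.+1 <= f b.+1.
  apply: ltn_chain => i lt_ib.
  have lt_phi : phi (inord i) < phi (inord i.+1).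
    by apply: incr; rewrite !inordK //; lia.
  have new_block : f i != f i.+1.
    apply/negbT; rewrite -edge_color_block edges //= !inordK //; lia.
  by rewrite ltn_neqAle new_block leq_div2r // ltnW.
have : f b.+1 < b.+1 by rewrite ltn_divLR // mulnC (leq_trans _ n_le).
lia.
Qed.

Lemma ramsey_lower m b n : n <= m * b.+1 ->
  ~ ord_ramsey_prop (star_sc m.+1) (cycle_mon b.+2) n.
Proof.
case: m => [|m] n_le ramsey.
  have n0 : n = 0 by lia.
  by subst n; have [[phi _]|[phi _]] := ramsey (fun _ _ => true); case: (phi ord0).
have [] := ramsey (block_coloring m.+1 n).
  exact: no_red_star_block.
exact: no_blue_cycle_block.
Qed.

Theorem theorem4p18 (a b : nat) : (1 <= a)%N -> (2 <= b)%N ->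
  is_ord_ramsey_number (star_sc a) (cycle_mon b) (1 + (a - 1) * (b - 1)).
Proof.
case: a => [|a] // _; case: b => [|[|b]] // _.
rewrite !subn1 /= add1n; split; first exact: ramsey_upper.
by move=> n; rewrite ltnS; apply: ramsey_lower.
Qed.
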